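(* A matrix $A\in\mathcal{C}_n$ is irreducible with respect to the cone $S_+(n)$ if and only if the linear span of the set of minimal zeros of $A$ equals $\mathbb{R}^n$. In particular, in that case $A$ has at least $n$ linearly independent minimal zeros.
   Context: $\mathcal{C}_n$ denotes the cone of copositive matrices: real symmetric $n\times n$ matrices $A$ with $x^TAx\ge 0$ for all $x\in\mathbb{R}^n_+$. $S_+(n)$ is the cone of positive semidefinite $n\times n$ matrices. For $A\in\mathcal{C}_n$, a zero of $A$ is a nonzero vector $u\in\mathbb{R}^n_+$ with $u^TAu=0$; its support is $\operatorname{Supp}(u)=\{i:u_i\ne0\}$; a zero $u$ is minimal if there is no zero $v$ with $\operatorname{Supp}(v)\subsetneq\operatorname{Supp}(u)$. For $A\in\mathcal{C}_n$ and $\mathcal{M}\subset\mathcal{C}_n$, $A$ is irreducible with respect to $\mathcal{M}$ if there do not exist $\gamma>0$ and $M\in\mathcal{M}\setminus\{0\}$ with $A-\gamma M\in\mathcal{C}_n$. *)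

From HB Require Import structures.
From mathcomp Require Import all_boot all_order all_algebra.
Set Implicit Arguments. Unset Strict Implicit. Unset Printing Implicit Defensive.
Import Order.TTheory GRing.Theory Num.Theory.
Local Open Scope ring_scope.

Section Copositive.
Variables (R : rcfType) (n : nat).

Definition qform (A : 'M[R]_n) (x : 'cV[R]_n) : R := (x^T *m A *m x) 0 0.

Definition nonneg_vec (x : 'cV[R]_n) : Prop := forall i, 0 <= x i 0.

Definition copositive (A : 'M[R]_n) : Prop :=
  A^T = A /\ forall x : 'cV[R]_n, nonneg_vec x -> 0 <= qform A x.

Definition psd (M : 'M[R]_n) : Prop :=
  M^T = M /\ forall x : 'cV[R]_n, 0 <= qform M x.

Definition is_zero_of (A : 'M[R]_n) (u : 'cV[R]_n) : Prop :=
  nonneg_vec u /\ u <> 0 /\ qform A u = 0.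

Definition supp (u : 'cV[R]_n) : {set 'I_n} := [set i | u i 0 != 0].

Definition minimal_zero (A : 'M[R]_n) (u : 'cV[R]_n) : Prop :=
  is_zero_of A u /\
  ~ (exists v, is_zero_of A v /\ supp v \proper supp u).

(* A irreducible with respect to the set Mset (A assumed copositive) *)
Definition irreducible_wrt (Mset : 'M[R]_n -> Prop) (A : 'M[R]_n) : Prop :=
  ~ (exists (gamma : R) (M : 'M[R]_n),
       0 < gamma /\ Mset M /\ M <> 0 /\ copositive (A - gamma *: M)).

Definition in_span (S : 'cV[R]_n -> Prop) (x : 'cV[R]_n) : Prop :=
  exists (k : nat) (c : 'I_k -> R) (u : 'I_k -> 'cV[R]_n),
    (forall i, S (u i)) /\ x = \sum_(i < k) c i *: u i.

Definition spans_all (S : 'cV[R]_n -> Prop) : Prop :=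
  forall x : 'cV[R]_n, in_span S x.

Definition lin_indep (k : nat) (u : 'I_k -> 'cV[R]_n) : Prop :=
  forall c : 'I_k -> R, \sum_(i < k) c i *: u i = 0 -> forall i, c i = 0.

End Copositive.

(* Sufficiency: if A - g M is copositive with M psd and g > 0, every zero u of
   A satisfies u^T M u = 0, hence M u = 0; so M vanishes on the span of the
   minimal zeros.
   Necessity: take a maximal linearly independent family of minimal zeros.  If
   it has fewer than n members, some w <> 0 is orthogonal to all minimal zeros,
   hence to all zeros (a zero splits into zeros of smaller support).  The key
   estimate copositive_gap then gives g > 0 with x^T A x >= g (w^T x)^2 on the
   nonnegative orthant, i.e. A - g w w^T is copositive, so A is reducible.
   The estimate is proved face by face, by induction on the support S: either
   the form descends from x to a facet along a direction in
   V = {x supported on S, w^T x = 0}, or it is positive definite on V and an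
   A-orthogonal complement x0 of V (obtained by inverting the compression of A
   to V) controls it directly. *)
From HB Require Import structures.
From mathcomp Require Import all_boot all_order all_algebra.
From mathcomp Require Import ring lra.
From Stdlib Require Import Classical.
Set Implicit Arguments. Unset Strict Implicit. Unset Printing Implicit Defensive.
Import Order.TTheory GRing.Theory Num.Theory.
Local Open Scope ring_scope.

Section Forms.
Variables (R : rcfType) (n : nat).
Implicit Types (A M : 'M[R]_n) (x y z u v w d e : 'cV[R]_n) (a t : R).

Definition bf A x y : R := (x^T *m A *m y) 0 0.
Definition dot x y : R := (x^T *m y) 0 0.

Lemma dotE x y : dot x y = \sum_i x i 0 * y i 0.
Proof. by rewrite /dot mxE; apply: eq_bigr => i _; rewrite mxE. Qed.

Lemma dotC x y : dot x y = dot y x.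
Proof. by rewrite !dotE; apply: eq_bigr => i _; rewrite mulrC. Qed.

Lemma dotDr x y z : dot x (y + z) = dot x y + dot x z.
Proof. by rewrite /dot mulmxDr mxE. Qed.

Lemma dotZr a x y : dot x (a *: y) = a * dot x y.
Proof. by rewrite /dot -scalemxAr mxE. Qed.

Lemma dotBr x y z : dot x (y - z) = dot x y - dot x z.
Proof. by rewrite dotDr -scaleN1r dotZr mulN1r. Qed.

Lemma dot0r x : dot x 0 = 0.
Proof. by rewrite /dot mulmx0 mxE. Qed.

Lemma dot_sumr k w (c : 'I_k -> R) (u : 'I_k -> 'cV[R]_n) :
  dot w (\sum_i c i *: u i) = \sum_i c i * dot w (u i).
Proof.
by rewrite /dot mulmx_sumr summxE; apply: eq_bigr => i _; rewrite -scalemxAr mxE.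
Qed.

Lemma bfDl A x y z : bf A (x + y) z = bf A x z + bf A y z.
Proof. by rewrite /bf linearD /= !mulmxDl mxE. Qed.

Lemma bfDr A x y z : bf A z (x + y) = bf A z x + bf A z y.
Proof. by rewrite /bf mulmxDr mxE. Qed.

Lemma bfZl A a x z : bf A (a *: x) z = a * bf A x z.
Proof. by rewrite /bf linearZ /= -!scalemxAl mxE. Qed.

Lemma bfZr A a x z : bf A z (a *: x) = a * bf A z x.
Proof. by rewrite /bf -scalemxAr mxE. Qed.

Lemma bf_sym A x y : A^T = A -> bf A x y = bf A y x.
Proof.
move=> sA; rewrite /bf; transitivity (((x^T *m A *m y)^T) 0 0); first by rewrite [RHS]mxE.
by rewrite !trmx_mul trmxK sA mulmxA.
Qed.

Lemma qformD A x y : A^T = A ->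
  qform A (x + y) = qform A x + 2 * bf A x y + qform A y.
Proof.
move=> sA; rewrite /qform -!/(bf _ _ _) bfDl !bfDr (bf_sym x y sA); ring.
Qed.

Lemma qformZ A a x : qform A (a *: x) = a ^+ 2 * qform A x.
Proof. by rewrite /qform -!/(bf _ _ _) bfZl bfZr expr2 mulrA. Qed.

Lemma qformN A x : qform A (- x) = qform A x.
Proof. by rewrite -scaleN1r qformZ sqrrN expr1n mul1r. Qed.

Lemma qform_line A x t e : A^T = A ->
  qform A (x + t *: e) = qform A x + 2 * t * bf A x e + t ^+ 2 * qform A e.
Proof. by move=> sA; rewrite qformD // qformZ bfZr mulrA. Qed.

Lemma qform0 A : qform A 0 = 0.
Proof. by rewrite /qform mulmx0 mxE. Qed.

Lemma dot_ge0 x : 0 <= dot x x.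
Proof. by rewrite dotE sumr_ge0 // => i _; rewrite -expr2 sqr_ge0. Qed.

Lemma dot_gt0 x : x != 0 -> 0 < dot x x.
Proof.
have sq0 i : 0 <= x i 0 * x i 0 by rewrite -expr2 sqr_ge0.
move=> x0; rewrite lt_def dot_ge0 andbT; apply: contra x0; rewrite dotE.
move=> /eqP/(psumr_eq0P (fun i _ => sq0 i)) hx; apply/eqP/matrixP => i j.
by rewrite ord1 mxE; apply/eqP; rewrite -sqrf_eq0 expr2 hx.
Qed.

Lemma nz_coord x : x != 0 -> exists j, x j 0 != 0.
Proof.
move=> hx; apply/existsP; apply: contraNT hx; rewrite negb_exists => /forallP h.
by apply/eqP/matrixP => i j; rewrite ord1 mxE; apply/eqP; move: (h i); rewrite negbK.
Qed.

Lemma neg_or_nonneg e : (exists j, e j 0 < 0) \/ nonneg_vec e.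
Proof.
case: (boolP [exists j, e j 0 < 0]) => [/existsP h|]; first by left.
by rewrite negb_exists => /forallP h; right => j; rewrite leNgt h.
Qed.

Lemma nonnegD x y : nonneg_vec x -> nonneg_vec y -> nonneg_vec (x + y).
Proof. by move=> hx hy i; rewrite mxE addr_ge0. Qed.

Lemma nonnegZ a x : 0 <= a -> nonneg_vec x -> nonneg_vec (a *: x).
Proof. by move=> ha hx i; rewrite mxE mulr_ge0. Qed.

End Forms.

Section CopositiveGeometry.
Variables (R : rcfType) (n : nat).
Implicit Types (A : 'M[R]_n) (x y u v w d e : 'cV[R]_n).

(* If x >= 0 and d >= 0 is a direction in which qform A does not grow, then
   copositivity forces x^T A d >= 0: otherwise q(x + t d) < 0 for large t. *)
Lemma copositive_bf_ge0 A x d : copositive A -> nonneg_vec x -> nonneg_vec d ->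
  qform A d <= 0 -> 0 <= bf A x d.
Proof.
move=> [sA cA] hx hd hqd; rewrite leNgt; apply/negP => hb.
set b := bf A x d in hb.
have hq0 := cA x hx.
set t := (qform A x + 1) / (- (2 * b)).
have ht : 0 <= t by rewrite /t divr_ge0 ?addr_ge0 // oppr_ge0; lra.
have h2 : 2 * t * b = - (qform A x + 1) by rewrite /t; field; rewrite lt_eqF.
have := cA (x + t *: d) (nonnegD hx (nonnegZ ht hd)).
rewrite qform_line // -/b h2.
have : 0 <= t ^+ 2 by apply: sqr_ge0.
nra.
Qed.

Lemma exit_point x e : nonneg_vec x -> (exists j, e j 0 < 0) ->
  exists t, 0 <= t /\ nonneg_vec (x + t *: e) /\
    exists i, e i 0 < 0 /\ (x + t *: e) i 0 = 0.
Proof.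
move=> hx [j0 hj0]; pose F i := x i 0 / - e i 0.
have [i hi hmin] := @arg_minP _ _ _ j0 (fun i => e i 0 < 0) F hj0.
have hF : 0 <= F i by rewrite divr_ge0 // oppr_ge0 ltW.
exists (F i); split=> //; split; last first.
  by exists i; split=> //; rewrite !mxE /F; field; rewrite lt_eqF.
move=> j; rewrite !mxE; case: (ltP (e j 0) 0) => hj.
  by have := hmin j hj; rewrite /F ler_pdivlMr ?oppr_gt0 // mulrN; lra.
exact: addr_ge0 (hx j) (mulr_ge0 hF hj).
Qed.

Lemma descent_direction A x d : copositive A -> nonneg_vec x -> d != 0 ->
  qform A d <= 0 ->
  exists e, (e = d \/ e = - d) /\ (exists j, e j 0 < 0) /\ bf A x e <= 0.
Proof.
move=> cA hx hd hq; have [j hj] := nz_coord hd.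
have bfN y : bf A x (- y) = - bf A x y by rewrite -scaleN1r bfZr mulN1r.
case: (lerP (bf A x d) 0) => hb.
  case: (neg_or_nonneg d) => hn; first by exists d; split; [left|split].
  have hb0 := copositive_bf_ge0 cA hx hn hq.
  exists (- d); split; first by right.
  split; last by rewrite bfN; lra.
  by exists j; rewrite mxE oppr_lt0 lt_def hj hn.
case: (neg_or_nonneg (- d)) => hn.
  by exists (- d); split; [right | split=> //; rewrite bfN; lra].
have := copositive_bf_ge0 cA hx hn (_ : qform A (- d) <= 0).
by rewrite bfN qformN; lra.
Qed.

Lemma zero_split A u v : copositive A -> is_zero_of A u -> is_zero_of A v ->
  supp v \proper supp u ->
  exists t y, u = y + t *: v /\ supp y \proper supp u /\ (y = 0 \/ is_zero_of A y).
Proof.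
move=> cA [hu [_ hqu]] [hv [hv0 hqv]] /properP [hsub _]; have [sA cA'] := cA.
have [j hj] := nz_coord (introN eqP hv0).
have hj' : (- v) j 0 < 0 by rewrite mxE oppr_lt0 lt_def hj hv.
have [t [ht [hy [i [hi hyi]]]]] := exit_point hu (ex_intro _ j hj').
set y := u + t *: - v in hy hyi.
exists t, y; split; first by rewrite /y scalerN addrNK.
have hvi : i \in supp v by move: hi; rewrite inE mxE oppr_lt0 => /gt_eqF ->.
split.
  apply/properP; split; last by exists i; rewrite ?(subsetP hsub) // inE hyi eqxx.
  apply/subsetP => l; rewrite !inE; apply: contraNN => /eqP hul.
  have : l \notin supp v by apply/negP => /(subsetP hsub); rewrite inE hul eqxx.
  by rewrite inE negbK !mxE hul => /eqP ->; rewrite oppr0 mulr0 addr0.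
have hb : 0 <= bf A u v by apply: copositive_bf_ge0; rewrite ?hqv.
have hqy : qform A y = 0.
  apply/le_anti; rewrite cA' // andbT /y qform_line // hqu qformN hqv.
  rewrite -scaleN1r bfZr; nra.
by case: (eqVneq y 0) => [|hy0]; [left | right; split=> //; split; [apply/eqP|]].
Qed.

Lemma orth_all_zeros A w : copositive A ->
  (forall u, minimal_zero A u -> dot w u = 0) ->
  forall u, is_zero_of A u -> dot w u = 0.
Proof.
move=> cA hmin u; have [m] := ubnP #|supp u|; elim: m u => // m IH u hm hu.
case: (classic (minimal_zero A u)) => [/hmin //|hnmin].
have [v [hv hvu]] : exists v, is_zero_of A v /\ supp v \proper supp u.
  by apply: NNPP => h; apply: hnmin.
have [t [y [eqU [hyu hy]]]] := zero_split cA hu hv hvu.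
have ltu (s : 'cV[R]_n) : supp s \proper supp u -> (#|supp s| < m)%N.
  by move=> /proper_card h; apply: leq_trans h _.
rewrite eqU dotDr dotZr (IH v (ltu _ hvu) hv) mulr0 addr0.
by case: hy => [->|hy]; [rewrite dot0r | apply: IH (ltu _ hyu) hy].
Qed.

End CopositiveGeometry.

Section Projection.
Variables (R : rcfType) (n : nat) (S : {set 'I_n}) (w : 'cV[R]_n).
Implicit Types (x d e v : 'cV[R]_n).

Definition supported x : Prop := forall i, i \notin S -> x i 0 = 0.

Definition indicator i : R := (i \in S)%:R.
Definition restr x : 'cV[R]_n := \col_i (indicator i * x i 0).

(* w restricted to S, and the orthogonal projection onto the subspace
   V = {x supported on S, w.x = 0} *)
Definition wS : 'cV[R]_n := restr w.
Definition projS : 'M[R]_n :=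
  \matrix_(i, j) ((i == j)%:R * indicator i - (dot wS wS)^-1 * (wS i 0 * wS j 0)).

Lemma indicator2 i : indicator i * indicator i = indicator i.
Proof. by rewrite /indicator; case: (i \in S); rewrite ?mulr1 ?mulr0. Qed.

Lemma projSE x : projS *m x = restr x - ((dot wS wS)^-1 * dot wS x) *: wS.
Proof.
apply/matrixP => i j; rewrite ord1 !mxE.
under eq_bigr do rewrite mxE mulrBl.
rewrite sumrB (bigD1 i) //= big1 ?addr0; last first.
  by move=> k /negbTE hk; rewrite eq_sym hk !mul0r.
rewrite eqxx mul1r (dotE wS x) mulr_sumr mulr_suml; congr (_ - _); apply: eq_bigr => k _.
by rewrite /wS !mxE; ring.
Qed.

Lemma dot_restr x : dot w (restr x) = dot wS x.
Proof. by rewrite !dotE; apply: eq_bigr => i _; rewrite !mxE; ring. Qed.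

Lemma dot_w_wS : dot w wS = dot wS wS.
Proof.
rewrite !dotE; apply: eq_bigr => i _; rewrite !mxE.
by rewrite -[in LHS]indicator2; ring.
Qed.

Lemma restr_id x : supported x -> restr x = x.
Proof.
move=> hx; apply/matrixP => i j; rewrite ord1 mxE /indicator.
by case: (boolP (i \in S)) => hi; rewrite ?mul1r // mul0r hx.
Qed.

Lemma dot_wS x : supported x -> dot wS x = dot w x.
Proof. by move=> hx; rewrite -dot_restr restr_id. Qed.

Lemma projS_sym : projS^T = projS.
Proof.
apply/matrixP => i j; rewrite !mxE eq_sym.
by case: eqVneq => [->|_]; rewrite ?mul0r; ring.
Qed.

Hypothesis wS_pos : 0 < dot wS wS.

Lemma projS_supported x : supported (projS *m x).
Proof.
by move=> i hi; rewrite projSE !mxE /indicator (negbTE hi) !mul0r mulr0 subr0.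
Qed.

Lemma projS_orth x : dot w (projS *m x) = 0.
Proof. by rewrite projSE dotBr dotZr dot_restr dot_w_wS; field; rewrite gt_eqF. Qed.

Lemma projS_id x : supported x -> dot w x = 0 -> projS *m x = x.
Proof.
by move=> h1 h2; rewrite projSE restr_id // (dot_wS h1) h2 mulr0 scale0r subr0.
Qed.

Lemma projS_idem x : projS *m (projS *m x) = projS *m x.
Proof. exact: projS_id (projS_supported x) (projS_orth x). Qed.

Variable A : 'M[R]_n.
Hypothesis sA : A^T = A.
Hypothesis posdef : forall d, supported d -> dot w d = 0 -> d != 0 -> 0 < qform A d.

(* The compression P A P of A to V, completed by the identity on the kernel of
   the projection P; it is invertible because qform A is definite on V. *)
Definition compressed : 'M[R]_n := projS *m A *m projS + ((1%:M : 'M[R]_n) - projS).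

Lemma compressedE v :
  compressed *m v = projS *m (A *m (projS *m v)) + (v - projS *m v).
Proof. by rewrite /compressed mulmxDl mulmxBl mul1mx -!mulmxA. Qed.

(* compressed v = 0 forces P A P v = 0, hence qform A (P v) = 0, so P v = 0
   and finally v = 0 *)
Lemma compressed_ker v : compressed *m v = 0 -> v = 0.
Proof.
move=> hv; set e := projS *m v.
have hAe : projS *m (A *m e) = 0.
  have := congr1 (mulmx projS) hv.
  by rewrite compressedE mulmxDr mulmxBr !projS_idem subrr addr0 mulmx0.
have qe : qform A e = 0.
  by rewrite /qform {1}/e trmx_mul projS_sym -!mulmxA hAe mulmx0 mxE.
have e0 : e = 0.
  apply/eqP; apply: contraT => hne.
  by have := posdef (projS_supported v) (projS_orth v) hne; rewrite qe ltxx.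
by move: hv; rewrite compressedE hAe -/e e0 subr0 add0r.
Qed.

Lemma compressed_unit : compressed \in unitmx.
Proof.
have cT : compressed^T = compressed.
  by rewrite /compressed linearD /= linearB /= trmx1 !trmx_mul projS_sym sA mulmxA.
rewrite unitmxE unitfE; apply/negP => /det0P [v hv0 hv].
have vT0 : v^T = 0 by apply: compressed_ker; rewrite -cT -trmx_mul hv trmx0.
by move: hv0; rewrite -(trmxK v) vT0 trmx0 eqxx.
Qed.

(* A vector x0 supported on S with w.x0 = 1 which is A-orthogonal to V;
   then every x supported on S splits A-orthogonally as (w.x) x0 + (x - (w.x) x0). *)
Lemma conjugate_vector : exists x0, supported x0 /\ dot w x0 = 1 /\
  forall e, supported e -> dot w e = 0 -> bf A e x0 = 0.
Proof.
set P := projS; set p := (dot wS wS)^-1 *: wS.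
set d := invmx compressed *m (- (P *m (A *m p))).
have Nd : compressed *m d = - (P *m (A *m p)) by rewrite mulKVmx ?compressed_unit.
have PAPd : P *m (A *m (P *m d)) = - (P *m (A *m p)).
  have := congr1 (mulmx P) Nd.
  by rewrite compressedE mulmxDr mulmxBr !projS_idem subrr addr0 mulmxN projS_idem.
have Pd : P *m d = d.
  move/eqP: Nd; rewrite compressedE PAPd addrC subr_eq addNr subr_eq0.
  by move=> /eqP.
exists (p + d); split.
  move=> i hi; rewrite -Pd mxE projS_supported // !mxE /indicator (negbTE hi).
  by rewrite mul0r mulr0 addr0.
split.
  by rewrite dotDr dotZr dot_w_wS -Pd projS_orth addr0 mulVf // gt_eqF.
move=> e he1 he2.
rewrite -(projS_id he1 he2) /bf trmx_mul -/P projS_sym -!mulmxA.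
by rewrite !mulmxDr -Pd PAPd mulmxN subrr mxE.
Qed.

End Projection.

Lemma small_enough (R : realDomainType) (I : eqType) (s : seq I) (Q : I -> R -> Prop) :
  (forall i g g', g' <= g -> Q i g -> Q i g') ->
  (forall i, i \in s -> exists g, 0 < g /\ Q i g) ->
  exists g, 0 < g /\ forall i, i \in s -> Q i g.
Proof.
move=> Qmono; elim: s => [|a s IH] hs; first by exists 1.
have [g1 [g1p h1]] := IH (fun i hi => hs i (mem_behead (s := a :: s) hi)).
have [g2 [g2p h2]] := hs a (mem_head _ _).
exists (Order.min g1 g2); split; first by rewrite lt_min g1p g2p.
move=> i; rewrite in_cons => /orP [/eqP ->|hi].
  by apply: Qmono h2; rewrite ge_min lexx orbT.
by apply: Qmono (h1 i hi); rewrite ge_min lexx.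
Qed.

Section GapBound.
Variables (R : rcfType) (n : nat) (A : 'M[R]_n) (w : 'cV[R]_n).
Hypothesis cA : copositive A.
Hypothesis w_orth_zeros : forall u, is_zero_of A u -> dot w u = 0.
Implicit Types (S : {set 'I_n}) (g : R) (x d e : 'cV[R]_n).

Definition gap_bound S g : Prop :=
  forall x, nonneg_vec x -> supported S x -> g * dot w x ^+ 2 <= qform A x.

Definition facet_bound S g : Prop := forall i, i \in S -> gap_bound (S :\ i) g.

Lemma gap_bound_le S g g' : g' <= g -> gap_bound S g -> gap_bound S g'.
Proof.
move=> hg hb x hx hS; apply: le_trans (hb x hx hS).
by apply: ler_wpM2r => //; apply: sqr_ge0.
Qed.

(* If, from x, the form does not increase along a direction e in V until the
   orthant is left, the bound at x follows from the bound at the exit point,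
   which lies on a facet and has the same value of w.x. *)
Lemma face_descent S g x e : facet_bound S g ->
  nonneg_vec x -> supported S x -> supported S e -> dot w e = 0 ->
  (exists j, e j 0 < 0) ->
  (forall t, 0 <= t -> nonneg_vec (x + t *: e) -> qform A (x + t *: e) <= qform A x) ->
  g * dot w x ^+ 2 <= qform A x.
Proof.
move=> hfacet hx hxS heS hew hneg hdesc.
have [t [ht [hy [i [hi hyi]]]]] := exit_point hx hneg.
have hiS : i \in S by apply: contraT => /heS hei; rewrite hei ltxx in hi.
have hyS : supported (S :\ i) (x + t *: e).
  move=> k; rewrite in_setD1 negb_and negbK => /orP [/eqP -> //|hk].
  by rewrite !mxE hxS // heS // mulr0 addr0.
have := hfacet i hiS _ hy hyS; rewrite dotDr dotZr hew mulr0 addr0 => h.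
exact: le_trans h (hdesc t ht hy).
Qed.

Lemma gap_nonpos_direction S g d : facet_bound S g ->
  supported S d -> dot w d = 0 -> d != 0 -> qform A d <= 0 -> gap_bound S g.
Proof.
move=> hfacet hd hdw hd0 hqd x hx hxS.
have [e [hed [hneg hbe]]] := descent_direction cA hx hd0 hqd.
have [heS hew hqe] : [/\ supported S e, dot w e = 0 & qform A e <= 0].
  case: hed => ->; split=> //; first by move=> i hi; rewrite mxE hd ?oppr0.
    by rewrite -scaleN1r dotZr hdw mulr0.
  by rewrite qformN.
apply: face_descent hfacet hx hxS heS hew hneg _ => t ht _.
have [sA _] := cA; rewrite qform_line //; have := sqr_ge0 t; nra.
Qed.

Lemma gap_conjugate_pos S x0 : supported S x0 -> dot w x0 = 1 ->
  (forall e, supported S e -> dot w e = 0 -> bf A e x0 = 0) ->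
  (forall e, supported S e -> dot w e = 0 -> 0 <= qform A e) ->
  gap_bound S (qform A x0).
Proof.
move=> hx0 hx0w hconj psdV x hx hxS; have [sA _] := cA.
set s := dot w x; set e := x - s *: x0.
have heS : supported S e by move=> i hi; rewrite !mxE hxS // hx0 // mulr0 subrr.
have hew : dot w e = 0 by rewrite dotBr dotZr hx0w mulr1 subrr.
have -> : qform A x = qform A (s *: x0 + e) by rewrite addrC subrK.
rewrite qformD // qformZ bfZl (bf_sym _ _ sA) hconj // !mulr0 addr0 mulrC.
have := psdV e heS hew; lra.
Qed.

(* Case 3: qform A is positive semidefinite on V and some x0 with w.x0 = 1
   has qform A x0 <= 0.  No positive multiple of x0 is nonnegative (it would be
   a zero not orthogonal to w), so from x >= 0 one moves towards (w.x) x0, along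
   which the form is convex with nonpositive endpoint value, until a facet. *)
Lemma gap_conjugate_nonpos S g x0 : facet_bound S g ->
  supported S x0 -> dot w x0 = 1 -> qform A x0 <= 0 ->
  (forall e, supported S e -> dot w e = 0 -> 0 <= qform A e) ->
  gap_bound S g.
Proof.
move=> hfacet hx0 hx0w hq0 psdV x hx hxS; have [sA cA'] := cA.
set s := dot w x.
have [s0|s0] := eqVneq s 0; first by rewrite s0 expr0n mulr0 cA'.
have hsx0 : ~ nonneg_vec (s *: x0).
  move=> hn; have hzero : is_zero_of A (s *: x0).
    split=> //; split.
      move/(congr1 (dot w)); rewrite dotZr hx0w mulr1 dot0r => h.
      by rewrite h eqxx in s0.
    by apply/le_anti; rewrite cA' // andbT qformZ; have := sqr_ge0 s; nra.
  by move: (w_orth_zeros hzero); rewrite dotZr hx0w mulr1 => /eqP; rewrite (negbTE s0).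
have [[j hj]|//] := neg_or_nonneg (s *: x0).
set e := s *: x0 - x.
have hej : e j 0 < 0 by rewrite !mxE; move: hj (hx j); rewrite mxE; lra.
have heS : supported S e by move=> i hi; rewrite !mxE hxS // hx0 // mulr0 subrr.
have hew : dot w e = 0 by rewrite dotBr dotZr hx0w mulr1 subrr.
apply: (face_descent hfacet hx hxS heS hew (ex_intro _ j hej)) => t ht hy.
have t1 : t <= 1 by move: (hy j) hj (hx j); rewrite !mxE; nra.
have hqe := psdV e heS hew.
have hend : qform A (x + e) <= 0.
  by rewrite addrC subrK qformZ; have := sqr_ge0 s; nra.
move: hend; rewrite qform_line // qformD // => hend.
have := mulr_ge0 (mulr_ge0 ht (_ : 0 <= 1 - t)) hqe; rewrite ?subr_ge0 //.
have := mulr_ge0 ht (cA' x hx); have := ler_wpM2l ht hend; rewrite mulr0; nra.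
Qed.

Lemma gap_step S g : 0 < g -> facet_bound S g -> exists g', 0 < g' /\ gap_bound S g'.
Proof.
move=> gp hfacet; have [sA cA'] := cA.
have := dot_ge0 (wS S w); rewrite le_eqVlt => /orP [/eqP wS0|wSpos].
  have [wS_0|/dot_gt0] := eqVneq (wS S w) 0; last by rewrite wS0 ltxx.
  exists 1; split=> // x hx hxS.
  by rewrite -(dot_wS w hxS) wS_0 dotC dot0r expr0n mulr0 cA'.
have [[d [hd [hdw [hd0 hqd]]]]|nodesc] :=
  classic (exists d, supported S d /\ dot w d = 0 /\ d != 0 /\ qform A d <= 0).
  by exists g; split=> //; apply: gap_nonpos_direction hd hdw hd0 hqd.
have posdef d : supported S d -> dot w d = 0 -> d != 0 -> 0 < qform A d.
  by move=> h1 h2 h3; rewrite ltNge; apply/negP => h4; apply: nodesc; exists d.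
have psdV e : supported S e -> dot w e = 0 -> 0 <= qform A e.
  move=> h1 h2; have [->|h3] := eqVneq e 0; first by rewrite qform0.
  exact/ltW/posdef.
have [x0 [hx0 [hx0w hconj]]] := conjugate_vector wSpos sA posdef.
have [hq0|hq0] := ltP 0 (qform A x0).
  by exists (qform A x0); split=> //; apply: gap_conjugate_pos.
by exists g; split=> //; apply: gap_conjugate_nonpos hx0 hx0w hq0 psdV.
Qed.

Lemma copositive_gap : exists g, 0 < g /\
  forall x, nonneg_vec x -> g * dot w x ^+ 2 <= qform A x.
Proof.
suff gapS : forall S, exists g, 0 < g /\ gap_bound S g.
  have [g [gp hg]] := gapS setT.
  by exists g; split=> // x hx; apply: hg => // i; rewrite inE.
move=> S; have [m] := ubnP #|S|; elim: m S => // m IH S hS.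
have [|g [gp hg]] := @small_enough _ _ (enum S) (fun i => gap_bound (S :\ i))
  (fun i g g' => @gap_bound_le (S :\ i) g g').
  move=> i; rewrite mem_enum => hi; apply: IH.
  by move: hS; rewrite (cardsD1 i) hi add1n ltnS.
by apply: (gap_step gp) => i hi; apply: hg; rewrite mem_enum.
Qed.

End GapBound.

Section Families.
Variables (R : rcfType) (n : nat).
Implicit Types (x v w : 'cV[R]_n).

Lemma nontrivial_kernel m p (M : 'M[R]_(m, p)) : (m < p)%N ->
  exists c : 'cV[R]_p, c != 0 /\ M *m c = 0.
Proof.
move=> hmp; set K := kermx M^T.
have K0 : K != 0.
  by rewrite kermx_eq0 /row_free mxrank_tr ltn_eqF // (leq_ltn_trans (rank_leq_row M)).
exists (nz_row K)^T; split; first by rewrite trmx_eq0 nz_row_eq0.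
apply: trmx_inj; rewrite trmx_mul trmxK trmx0; apply/eqP.
by rewrite -sub_kermx nz_row_sub.
Qed.

Definition colmx k (u : 'I_k -> 'cV[R]_n) : 'M[R]_(n, k) := \matrix_(i, j) u j i 0.

Lemma colmxE k (u : 'I_k -> 'cV[R]_n) (c : 'cV[R]_k) :
  colmx u *m c = \sum_j c j 0 *: u j.
Proof.
apply/matrixP => i l; rewrite ord1 !mxE summxE; apply: eq_bigr => j _.
by rewrite !mxE mulrC.
Qed.

Lemma indep_colmx k (u : 'I_k -> 'cV[R]_n) (c : 'cV[R]_k) :
  lin_indep u -> colmx u *m c = 0 -> c = 0.
Proof.
rewrite colmxE => hu /(hu (fun j => c j 0)) hc.
by apply/matrixP => i j; rewrite ord1 hc mxE.
Qed.

Lemma indep_bound k (u : 'I_k -> 'cV[R]_n) : lin_indep u -> (k <= n)%N.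
Proof.
move=> hu; rewrite leqNgt; apply/negP => /(nontrivial_kernel (colmx u)) [c [c0 hc]].
by rewrite (indep_colmx hu hc) eqxx in c0.
Qed.

Lemma indep_span (u : 'I_n -> 'cV[R]_n) : lin_indep u ->
  forall x, exists c : 'I_n -> R, x = \sum_i c i *: u i.
Proof.
move=> hu x; have uU : colmx u \in unitmx.
  rewrite -unitmx_tr unitmxE unitfE; apply/negP => /det0P [v v0 hv].
  have : colmx u *m v^T = 0 by rewrite -(trmxK (colmx u)) -trmx_mul hv trmx0.
  by move/(indep_colmx hu)/eqP; rewrite trmx_eq0 (negbTE v0).
by exists (fun j => (invmx (colmx u) *m x) j 0); rewrite -colmxE mulKVmx.
Qed.

Lemma orth_vector k (u : 'I_k -> 'cV[R]_n) : (k < n)%N ->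
  exists w, w != 0 /\ forall i, dot w (u i) = 0.
Proof.
move=> hk; have [w [w0 hw]] := nontrivial_kernel (colmx u)^T hk.
exists w; split=> // i; rewrite dotC dotE.
move/matrixP/(_ i 0): hw; rewrite !mxE => hw; apply: etrans hw.
by apply: eq_bigr => j _; rewrite !mxE.
Qed.

Definition extend k (u : 'I_k -> 'cV[R]_n) v (i : 'I_k.+1) : 'cV[R]_n :=
  if unlift ord_max i is Some j then u j else v.

Lemma extend_widen k (u : 'I_k -> 'cV[R]_n) v (i : 'I_k) :
  extend u v (widen_ord (leqnSn k) i) = u i.
Proof.
have -> : widen_ord (leqnSn k) i = lift ord_max i.
  by apply: val_inj; rewrite /= /bump leqNgt ltn_ord.
by rewrite /extend liftK.
Qed.

Lemma extend_max k (u : 'I_k -> 'cV[R]_n) v : extend u v ord_max = v.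
Proof. by rewrite /extend unlift_none. Qed.

Lemma extend_indep k (u : 'I_k -> 'cV[R]_n) v : lin_indep u ->
  ~ (exists c : 'I_k -> R, v = \sum_i c i *: u i) -> lin_indep (extend u v).
Proof.
move=> hu hv c; rewrite big_ord_recr /= extend_max.
under eq_bigr do rewrite extend_widen.
move=> hs; have hcm : c ord_max = 0.
  apply: NNPP => hc; apply: hv.
  exists (fun i => - c (widen_ord (leqnSn k) i) / c ord_max).
  apply: (scalerI (introN eqP hc)); rewrite scaler_sumr.
  have -> : c ord_max *: v = - \sum_(i < k) c (widen_ord (leqnSn k) i) *: u i.
    by apply/eqP; rewrite -addr_eq0 addrC hs.
  rewrite -sumrN; apply: eq_bigr => i _; rewrite scalerA -scaleNr; congr (_ *: _).
  by field; apply/eqP.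
move: hs; rewrite hcm scale0r addr0 => /hu h i.
case: (unliftP ord_max i) => [j ->|->] //.
by rewrite -(h j); congr c; apply: val_inj; rewrite /= /bump leqNgt ltn_ord.
Qed.

End Families.

Lemma last_true (P : nat -> Prop) N : P 0%N -> ~ P N -> exists k, P k /\ ~ P k.+1.
Proof.
move=> P0; elim: N => [//|N IH] hN.
by case: (classic (P N)) => [h|/IH]; first by exists N.
Qed.

Section Irreducibility.
Variables (R : rcfType) (n : nat).
Implicit Types (A M : 'M[R]_n) (x u y w : 'cV[R]_n).

Lemma qform_sub A M g x : qform (A - g *: M) x = qform A x - g * qform M x.
Proof. by rewrite /qform mulmxBr mulmxBl -scalemxAr -scalemxAl !mxE. Qed.

Lemma qform_rank1 w x : qform (w *m w^T) x = dot w x ^+ 2.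
Proof.
rewrite /qform mulmxA -mulmxA mxE big_ord1 expr2.
by congr (_ * _); rewrite -/(dot x w) dotC.
Qed.

Lemma psd_bf0 M u y : psd M -> qform M u = 0 -> bf M u y = 0.
Proof.
move=> [sM pM] hq; set b := bf M u y; set Q := qform M y.
have hQ : 0 < Q + 1 by rewrite ltr_wpDl ?pM.
have := pM (u + (- b / (Q + 1)) *: y); rewrite qform_line // hq -/b -/Q.
have -> : 0 + 2 * (- b / (Q + 1)) * b + (- b / (Q + 1)) ^+ 2 * Q =
          - (b ^+ 2 * (Q + 2)) / (Q + 1) ^+ 2 by field; rewrite gt_eqF.
rewrite pmulr_lge0 ?invr_gt0 ?exprn_gt0 // oppr_ge0 => hb.
apply/eqP; rewrite -sqrf_eq0 eq_le sqr_ge0 andbT.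
by rewrite -(pmulr_lle0 _ (_ : 0 < Q + 2)) // ltr_wpDl ?pM.
Qed.

Lemma psd_ker M u : psd M -> qform M u = 0 -> M *m u = 0.
Proof.
move=> pM hq; have hb : bf M u (M *m u) = dot (M *m u) (M *m u).
  by rewrite /bf /dot trmx_mul pM.1.
by apply/eqP; apply: contraT => /dot_gt0; rewrite -hb psd_bf0 // ltxx.
Qed.

(* If the minimal zeros span R^n, a psd M with A - g M copositive vanishes on
   every minimal zero, hence on R^n. *)
Lemma spanning_irreducible A : copositive A -> spans_all (minimal_zero A) ->
  irreducible_wrt (@psd R n) A.
Proof.
move=> [sA cA] hsp [g [M [gp [pM [M0 [_ cAM]]]]]].
have Mu u : minimal_zero A u -> M *m u = 0.
  move=> [[hu [_ hqu]] _]; apply: psd_ker => //.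
  apply/le_anti; rewrite pM.2 andbT -(pmulr_rle0 _ gp).
  by have := cAM u hu; rewrite qform_sub hqu sub0r oppr_ge0.
have Mx x : M *m x = 0.
  have [k [c [u [hu ->]]]] := hsp x.
  by rewrite mulmx_sumr big1 // => i _; rewrite -scalemxAr Mu // scaler0.
apply: M0; apply/matrixP => i j.
by have := Mx (delta_mx j 0); rewrite -colE => /matrixP/(_ i 0); rewrite !mxE.
Qed.

(* A nonzero w orthogonal to all minimal zeros gives the psd witness w w^T of
   reducibility, thanks to the gap estimate. *)
Lemma reducible_of_orth A w : copositive A -> w != 0 ->
  (forall u, minimal_zero A u -> dot w u = 0) -> ~ irreducible_wrt (@psd R n) A.
Proof.
move=> cA w0 hw; have [sA _] := cA.
have [g [gp hg]] := copositive_gap cA (orth_all_zeros cA hw).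
apply; exists g, (w *m w^T); split=> //; split.
  split; first by rewrite trmx_mul trmxK.
  by move=> x; rewrite qform_rank1 sqr_ge0.
split.
  move=> h0; have := qform_rank1 w w; rewrite h0 /qform mulmx0 mul0mx mxE.
  by move/esym/eqP; rewrite sqrf_eq0 gt_eqF ?dot_gt0.
split; first by rewrite linearB /= linearZ /= sA trmx_mul trmxK.
by move=> x hx; rewrite qform_sub qform_rank1 subr_ge0 hg.
Qed.

(* A maximal independent family of minimal zeros either has n members or
   admits a common orthogonal vector, which makes A reducible. *)
Lemma basis_or_reducible A : copositive A ->
  (exists u : 'I_n -> 'cV[R]_n, (forall i, minimal_zero A (u i)) /\ lin_indep u)
  \/ ~ irreducible_wrt (@psd R n) A.
Proof.
move=> cA.
pose P k := exists u : 'I_k -> 'cV[R]_n, (forall i, minimal_zero A (u i)) /\ lin_indep u.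
have [k [[u [hum hui]] hk1]] : exists k, P k /\ ~ P k.+1.
  apply: (@last_true P n.+1); first by exists (fun _ => 0); split=> [[]|c _ []].
  by move=> [u [_ /indep_bound]]; rewrite ltnn.
have := indep_bound hui; rewrite leq_eqVlt => /orP [/eqP kn|kn].
  by left; subst k; exists u.
right; have [w [w0 hw]] := orth_vector u kn.
apply: reducible_of_orth cA w0 _ => v hv.
have [c ->] : exists c : 'I_k -> R, v = \sum_i c i *: u i.
  apply: NNPP => hnot; apply: hk1; exists (extend u v); split; last exact: extend_indep.
  by move=> i; rewrite /extend; case: unlift.
by rewrite dot_sumr big1 // => i _; rewrite hw mulr0.
Qed.

End Irreducibility.

Unset Implicit Arguments.

Theorem theorem4p5 (R : rcfType) (n : nat) (A : 'M[R]_n) :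
  copositive A ->
  (irreducible_wrt (@psd R n) A <-> spans_all (minimal_zero A)) /\
  (irreducible_wrt (@psd R n) A ->
     exists u : 'I_n -> 'cV[R]_n,
       (forall i, minimal_zero A (u i)) /\ lin_indep u).
Proof.
move=> cA.
have basis (irr : irreducible_wrt (@psd R n) A) : exists u : 'I_n -> 'cV[R]_n,
    (forall i, minimal_zero A (u i)) /\ lin_indep u.
  by case: (basis_or_reducible cA) => // /(_ irr).
split=> //; split=> [irr x|]; last exact: spanning_irreducible.
have [u [hum hui]] := basis irr; have [c hc] := indep_span hui x.
by exists n, c, u.
Qed.
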